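(* Consider FedProx, as described in the context, and a round $t$ whose step size satisfies $\gamma_t\le1/\alpha$. Assume that the bounded variance, bounded stochastic gradient norm and $L$-smoothness assumptions hold. Then for every client $i$ and every $k\in\{0,\dots,E\}$, $$\mathbb{E}\|\overline{\mathbf{w}}_{t,k}-\mathbf{w}^i_{t,k}\|^2\le4\gamma_t^2E^2G^2.$$
   Context: Setting: there are $C$ clients with weights $p_i\ge0$ satisfying $\sum_ip_i=1$, local objectives $F_i:\mathbb{R}^D\to\mathbb{R}$, and global objective $F=\sum_ip_iF_i$. FedProx with $\alpha>0$, $E\ge1$ local steps and step sizes $\gamma_t$, with all clients participating: in round $t$, $\mathbf{w}^i_{t,0}=\overline{\mathbf{w}}_{t,0}$ and, for $k=0,\dots,E-1$, $$\mathbf{w}^i_{t,k+1}=(1-\alpha\gamma_t)\mathbf{w}^i_{t,k}+\alpha\gamma_t\overline{\mathbf{w}}_{t,0}-\gamma_tg_i(\mathbf{w}^i_{t,k}),$$ with stochastic gradients $g_i$ of $F_i$ sampled independently given the past. Also $\overline{\mathbf{w}}_{t,k}=\sum_ip_i\mathbf{w}^i_{t,k}$ and $\overline{\mathbf{w}}_{t+1,0}=\overline{\mathbf{w}}_{t,E}$. Assumptions: - Unbiasedness: $\mathbb{E}\,g_i(\mathbf{w}^i_{t,k})=\nabla F_i(\mathbf{w}^i_{t,k})$. - Variance: $\mathbb{E}\|g_i(\mathbf{w}^i_{t,k})-\nabla F_i(\mathbf{w}^i_{t,k})\|^2\le\sigma^2$. - Bounded second moment: $\mathbb{E}\|g_i(\mathbf{w}^i_{t,k})\|^2\le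 G^2$ for all $i,t,k$. - Smoothness: each $\nabla F_i$ is $L$-Lipschitz. $\mathbb{E}$ is total expectation. *)

From HB Require Import structures.
From mathcomp Require Import all_boot all_order all_algebra.
From mathcomp Require Import all_classical all_reals all_analysis.
Set Implicit Arguments. Unset Strict Implicit. Unset Printing Implicit Defensive.
Import Order.TTheory GRing.Theory Num.Theory.
Import numFieldNormedType.Exports.
Local Open Scope ring_scope.

Definition sqnorm (R : realType) (D : nat) (v : 'rV[R]_D) : R :=
  \sum_(j < D) (v ord0 j) ^+ 2.

Definition dotp (R : realType) (D : nat) (u v : 'rV[R]_D) : R :=
  \sum_(j < D) u ord0 j * v ord0 j.

Definition enorm (R : realType) (D : nat) (v : 'rV[R]_D) : R :=
  Num.sqrt (sqnorm v).

Definition wavg (R : realType) (D C : nat) (p : 'I_C -> R)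
  (w : 'I_C -> 'rV[R]_D) : 'rV[R]_D := \sum_(i < C) p i *: w i.

From HB Require Import structures.
From mathcomp Require Import all_boot all_order all_algebra.
From mathcomp Require Import all_classical all_reals all_analysis.
From mathcomp Require Import ring lra zify measurable_realfun.
Set Implicit Arguments. Unset Strict Implicit. Unset Printing Implicit Defensive.
Import Order.TTheory GRing.Theory Num.Theory.
Import numFieldNormedType.Exports.
Local Open Scope ring_scope.

(* With b = 1 - alpha gamma_t in [0, 1], the local iterates of round t are
   w^i_{t,k} = wbar_{t,0} - gamma_t U_i, where U_i = sum_{q<k} b^(k-1-q) g_i(q)
   is a discounted sum of stochastic gradients.  Hence
   wbar_{t,k} - w^i_{t,k} = gamma_t (U_i - sum_l p_l U_l), whose squared norm is
   at most 2 gamma_t^2 (|U_i|^2 + sum_l p_l |U_l|^2) by convexity, while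
   E|U_l|^2 <= k^2 G^2 by Cauchy-Schwarz, since all the weights b^j are <= 1. *)

Lemma sqr_wsum_le (R : realDomainType) (I : finType) (c x : I -> R) :
  (forall q, 0 <= c q) ->
  (\sum_q c q * x q) ^+ 2 <= (\sum_q c q) * \sum_q c q * x q ^+ 2.
Proof.
move=> c_ge0.
set S := \sum_q c q; set Q := \sum_q c q * x q ^+ 2; set M := \sum_q c q * x q.
have lagrange : \sum_q \sum_r c q * c r * (x q - x r) ^+ 2 = 2 * (S * Q - M ^+ 2).
  have SQ_l : S * Q = \sum_q \sum_r c q * (c r * x r ^+ 2).
    by rewrite mulr_suml; apply: eq_bigr => q _; rewrite mulr_sumr.
  have SQ_r : S * Q = \sum_q \sum_r (c q * x q ^+ 2) * c r.
    by rewrite mulrC mulr_suml; apply: eq_bigr => q _; rewrite mulr_sumr.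
  have M2 : M ^+ 2 = \sum_q \sum_r (c q * x q) * (c r * x r).
    by rewrite expr2 mulr_suml; apply: eq_bigr => q _; rewrite mulr_sumr.
  have -> : 2 * (S * Q - M ^+ 2) = S * Q + S * Q - 2 * M ^+ 2 by ring.
  rewrite {1}SQ_l SQ_r M2 -big_split /= mulr_sumr -sumrB.
  apply: eq_bigr => q _; rewrite -big_split /= mulr_sumr -sumrB.
  by apply: eq_bigr => r _; ring.
have : 0 <= 2 * (S * Q - M ^+ 2).
  rewrite -lagrange; apply: sumr_ge0 => q _; apply: sumr_ge0 => r _.
  by apply: mulr_ge0; [exact: mulr_ge0 | exact: sqr_ge0].
by rewrite pmulr_rge0 // subr_ge0.
Qed.

Section SquaredNorm.
Variables (R : realType) (D : nat).
Implicit Types (u v : 'rV[R]_D) (a : R).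

Lemma sqnorm_ge0 v : 0 <= sqnorm v.
Proof. by apply: sumr_ge0 => j _; exact: sqr_ge0. Qed.

Lemma sqnormZ a v : sqnorm (a *: v) = a ^+ 2 * sqnorm v.
Proof. by rewrite /sqnorm mulr_sumr; apply: eq_bigr => j _; rewrite mxE exprMn. Qed.

Lemma sqnormB_le u v : sqnorm (u - v) <= 2 * sqnorm u + 2 * sqnorm v.
Proof.
rewrite /sqnorm !mulr_sumr -big_split /=; apply: ler_sum => j _; rewrite !mxE.
by have := sqr_ge0 (u ord0 j + v ord0 j); nra.
Qed.

Lemma sqnorm_wsum_le {I : finType} (c : I -> R) (v : I -> 'rV[R]_D) :
  (forall q, 0 <= c q) ->
  sqnorm (\sum_q c q *: v q) <= (\sum_q c q) * \sum_q c q * sqnorm (v q).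
Proof.
move=> c_ge0; rewrite /sqnorm.
under eq_bigr do rewrite summxE.
under eq_bigr do under eq_bigr do rewrite mxE.
under [X in _ * X]eq_bigr do rewrite mulr_sumr.
rewrite exchange_big /= mulr_sumr; apply: ler_sum => j _.
exact: sqr_wsum_le.
Qed.

Lemma sqnorm_sub_wavg_le (C : nat) (p : 'I_C -> R) (u : 'I_C -> 'rV[R]_D) i :
  (forall l, 0 <= p l) -> \sum_l p l = 1 ->
  sqnorm (u i - wavg p u) <= 2 * sqnorm (u i) + 2 * \sum_l p l * sqnorm (u l).
Proof.
move=> p_ge0 p_sum1; apply: le_trans (sqnormB_le _ _) _.
rewrite lerD2l ler_wpM2l //.
by have := @sqnorm_wsum_le _ p u p_ge0; rewrite p_sum1 mul1r.
Qed.

Lemma wavg_dev_affine (C : nat) (p : 'I_C -> R) (x0 : 'rV[R]_D) a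
    (u : 'I_C -> 'rV[R]_D) i :
  \sum_l p l = 1 ->
  wavg p (fun l => x0 - a *: u l) - (x0 - a *: u i) = a *: (u i - wavg p u).
Proof.
move=> p_sum1.
have -> : wavg p (fun l => x0 - a *: u l) = x0 - a *: wavg p u.
  rewrite /wavg scaler_sumr -[x0 in RHS]scale1r -p_sum1 scaler_suml -sumrB.
  by apply: eq_bigr => l _; rewrite scalerBr !scalerA mulrC.
by rewrite opprB addrC addrA subrK scalerBr.
Qed.

End SquaredNorm.

Section DiscountedSum.
Variables (R : comPzRingType) (V : lmodType R).

Definition discounted_sum (b : R) (v : nat -> V) (m : nat) : V :=
  \sum_(q < m) b ^+ (m.-1 - q) *: v q.

Lemma discounted_sumS b v m :
  discounted_sum b v m.+1 = b *: discounted_sum b v m + v m.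
Proof.
rewrite /discounted_sum big_ord_recr /= subnn expr0 scale1r scaler_sumr.
congr (_ + _); apply: eq_bigr => q _; rewrite scalerA -exprS.
by congr (_ ^+ _ *: _); have := ltn_ord q; lia.
Qed.

Lemma prox_iterates_closed_form (a c : R) (x0 : V) (x g : nat -> V) (n : nat) :
  x 0%N = x0 ->
  (forall m, (m < n)%N -> x m.+1 = (1 - a) *: x m + a *: x0 - c *: g m) ->
  forall m, (m <= n)%N -> x m = x0 - c *: discounted_sum (1 - a) g m.
Proof.
move=> x_0 x_step; elim=> [|m IH] mn.
  by rewrite x_0 /discounted_sum big_ord0 scaler0 subr0.
rewrite x_step // IH 1?ltnW // discounted_sumS scalerBr scalerDr !scalerA.
rewrite (mulrC c) opprD addrA; congr (_ - _).
by rewrite addrAC -scalerDl subrK scale1r.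
Qed.

End DiscountedSum.

Section RandomVectors.
Variables (d : measure_display) (T : measurableType d) (R : realType) (D : nat).
Variable mu : {measure set T -> \bar R}.

Definition rV_measurable (v : T -> 'rV[R]_D) :=
  forall j, measurable_fun setT (fun x => v x ord0 j).

Lemma rV_measurableB (u v : T -> 'rV[R]_D) :
  rV_measurable u -> rV_measurable v -> rV_measurable (fun x => u x - v x).
Proof.
by move=> u_meas v_meas j; under eq_fun do rewrite !mxE; exact: measurable_funB.
Qed.

Lemma rV_measurable_wsum (I : finType) (c : I -> R) (v : I -> T -> 'rV[R]_D) :
  (forall q, rV_measurable (v q)) -> rV_measurable (fun x => \sum_q c q *: v q x).
Proof.
move=> mv j; under eq_fun do rewrite summxE.
apply: measurable_sum => q; under eq_fun do rewrite mxE.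
exact: measurable_funM (mv q j).
Qed.

Lemma measurable_sqnorm (v : T -> 'rV[R]_D) :
  rV_measurable v -> measurable_fun setT (fun x => sqnorm (v x)).
Proof. by move=> mv; apply: measurable_sum => j; exact: measurable_funX. Qed.

Lemma le_integral_wsum (I : finType) (f : T -> R) (c : I -> R) (h : I -> T -> R)
    (B : I -> R) :
  measurable_fun setT f -> (forall x, 0 <= f x) ->
  (forall q, 0 <= c q) -> (forall q, measurable_fun setT (h q)) ->
  (forall q x, 0 <= h q x) -> (forall x, f x <= \sum_q c q * h q x) ->
  (forall q, \int[mu]_x (h q x)%:E <= (B q)%:E)%E ->
  (\int[mu]_x (f x)%:E <= (\sum_q c q * B q)%:E)%E.
Proof.
move=> mf f_ge0 c_ge0 mh h_ge0 f_le h_le.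
have mch q : measurable_fun setT (fun x => c q * h q x) by exact: measurable_funM.
apply: (@le_trans _ _ (\int[mu]_x (\sum_q c q * h q x)%:E)%E).
  apply: ge0_le_integral => //.
  - by move=> x _; rewrite lee_fin.
  - exact/measurable_EFinP.
  - by apply/measurable_EFinP; exact: measurable_sum.
  - by move=> x _; rewrite lee_fin.
under eq_integral do rewrite -sumEFin.
rewrite ge0_integral_sum //; last first.
- by move=> q x _; rewrite lee_fin mulr_ge0.
- by move=> q; exact/measurable_EFinP.
rewrite -sumEFin; apply: lee_sum => q _.
under eq_integral do rewrite EFinM.
rewrite ge0_integralZl_EFin //.
- by rewrite EFinM lee_wpmul2l ?lee_fin.
- by move=> x _; rewrite lee_fin.
- exact/measurable_EFinP.
Qed.

Lemma integral_sqnorm_discounted_sum_le (b K : R) (v : nat -> T -> 'rV[R]_D) m :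
  0 <= b <= 1 -> (forall q, rV_measurable (v q)) ->
  (forall q, (q < m)%N -> \int[mu]_x (sqnorm (v q x))%:E <= K%:E)%E ->
  (\int[mu]_x (sqnorm (discounted_sum b (v^~ x) m))%:E <= (m%:R ^+ 2 * K)%:E)%E.
Proof.
move=> /andP[b_ge0 b_le1] mv v_le.
have c_ge0 (q : 'I_m) : 0 <= b ^+ (m.-1 - q) by exact: exprn_ge0.
have c_le1 (q : 'I_m) : b ^+ (m.-1 - q) <= 1 by exact: exprn_ile1.
have -> : m%:R ^+ 2 * K = \sum_(q < m) m%:R * K.
  by rewrite sumr_const card_ord; ring.
apply: (le_integral_wsum (I := 'I_m) (h := fun q x => sqnorm (v q x))) => //.
- by apply: measurable_sqnorm; exact: rV_measurable_wsum.
- by move=> x; exact: sqnorm_ge0.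
- by move=> q; apply: measurable_sqnorm.
- by move=> q x; exact: sqnorm_ge0.
- move=> x; rewrite /discounted_sum.
  apply: le_trans (sqnorm_wsum_le (fun q : 'I_m => v q x) c_ge0) _.
  rewrite -mulr_sumr; apply: ler_pM.
  + exact: sumr_ge0.
  + by apply: sumr_ge0 => q _; rewrite mulr_ge0 ?sqnorm_ge0.
  + by rewrite -[m in m%:R](card_ord m) -sumr_const; exact: ler_sum.
  + by apply: ler_sum => q _; rewrite ler_piMl ?sqnorm_ge0.
- by move=> q; exact: v_le.
Qed.

Lemma integral_sqnorm_sub_wavg_le (C : nat) (p : 'I_C -> R)
    (u : 'I_C -> T -> 'rV[R]_D) (K : R) i :
  (forall l, 0 <= p l) -> \sum_l p l = 1 -> (forall l, rV_measurable (u l)) ->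
  (forall l, \int[mu]_x (sqnorm (u l x))%:E <= K%:E)%E ->
  (\int[mu]_x (sqnorm (u i x - wavg p (u^~ x)))%:E <= (4 * K)%:E)%E.
Proof.
move=> p_ge0 p_sum1 u_meas u_le.
(* The indicator folds the [u i] term of [sqnorm_sub_wavg_le] into the sum. *)
pose c l := 2 * (p l + (l == i)%:R).
have sum_c a : \sum_l c l * a l = 2 * a i + 2 * \sum_l p l * a l.
  have -> : a i = \sum_l (l == i)%:R * a l.
    by rewrite (bigD1 i) //= eqxx mul1r big1 ?addr0 // => l /negbTE ->; rewrite mul0r.
  by rewrite !mulr_sumr -big_split /=; apply: eq_bigr => l _; rewrite /c; ring.
have -> : 4 * K = \sum_l c l * K by rewrite sum_c -mulr_suml p_sum1; ring.
apply: (le_integral_wsum (c := c) (h := fun l x => sqnorm (u l x))) => //.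
- by apply: measurable_sqnorm; apply: rV_measurableB => //; exact: rV_measurable_wsum.
- by move=> x; exact: sqnorm_ge0.
- by move=> l; rewrite mulr_ge0 ?addr_ge0.
- by move=> l; exact: measurable_sqnorm.
- by move=> l x; exact: sqnorm_ge0.
- by move=> x; rewrite sum_c; exact: sqnorm_sub_wavg_le.
Qed.

End RandomVectors.

Lemma one_subr_mul_in01 (R : realFieldType) (a c : R) :
  0 < a -> 0 < c -> c <= 1 / a -> 0 <= 1 - a * c <= 1.
Proof.
move=> a_gt0 c_gt0 c_le; apply/andP; split.
  by rewrite subr_ge0 -ler_pdivlMl // mulr1 -div1r.
by rewrite gerBl mulr_ge0 // ltW.
Qed.

Theorem lemma3
  (R : realType) (d : measure_display) (T : measurableType d)
  (P : probability T R)
  (C D nE : nat) (p : 'I_C -> R)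
  (F : 'I_C -> 'rV[R]_D -> R) (gradF : 'I_C -> 'rV[R]_D -> 'rV[R]_D)
  (alpha L sigma G : R) (gamma : nat -> R)
  (w : 'I_C -> nat -> nat -> T -> 'rV[R]_D)
  (g : 'I_C -> nat -> nat -> T -> 'rV[R]_D)
  (t : nat) (i : 'I_C) (k : nat) :
  (forall j, 0 <= p j) -> \sum_(j < C) p j = 1 ->
  0 < alpha -> (1 <= nE)%N -> (forall s, 0 < gamma s) ->
  (* gradF j is the gradient of F j *)
  (forall j x, differentiable (F j) x /\
     forall v, 'd (F j) x v = dotp (gradF j x) v) ->
  (* FedProx local iterations, all clients participating *)
  (forall j s x, w j s 0%N x = wavg p (fun l => w l s 0%N x)) ->
  (forall j s m x, (m < nE)%N ->
     w j s m.+1 x = (1 - alpha * gamma s) *: w j s m x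
                    + (alpha * gamma s) *: wavg p (fun l => w l s 0%N x)
                    - gamma s *: g j s m x) ->
  (forall s x, wavg p (fun l => w l s.+1 0%N x) = wavg p (fun l => w l s nE x)) ->
  (* stochastic gradients are random vectors *)
  (forall j s m c, measurable_fun setT (fun x => g j s m x ord0 c)) ->
  (* bounded variance *)
  (forall j s m, (m < nE)%N ->
     (\int[P]_x (sqnorm (g j s m x - gradF j (w j s m x)))%:E <= (sigma ^+ 2)%:E)%E) ->
  (* bounded second moment *)
  (forall j s m, (m < nE)%N ->
     (\int[P]_x (sqnorm (g j s m x))%:E <= (G ^+ 2)%:E)%E) ->
  (* L-smoothness *)
  (forall j x y, enorm (gradF j x - gradF j y) <= L * enorm (x - y)) ->
  gamma t <= 1 / alpha -> (k <= nE)%N ->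
  (\int[P]_x (sqnorm (wavg p (fun l => w l t k x) - w i t k x))%:E
     <= (4 * gamma t ^+ 2 * (nE%:R) ^+ 2 * G ^+ 2)%:E)%E.
Proof.
move=> p_ge0 p_sum1 alpha_gt0 _ gamma_gt0 _ w_init w_step _ g_meas _ g_bound _
  gamma_le k_le.
set c := gamma t; set b := 1 - alpha * c.
have b01 : 0 <= b <= 1 := one_subr_mul_in01 alpha_gt0 (gamma_gt0 t) gamma_le.
pose U l x := discounted_sum b (fun q => g l t q x) k.
have w_closed l x : w l t k x = wavg p (fun j => w j t 0 x) - c *: U l x.
  apply: (prox_iterates_closed_form (n := nE) (x := fun m => w l t m x)) => // m m_lt.
  exact: w_step.
have U_bound l : (\int[P]_x (sqnorm (U l x))%:E <= (k%:R ^+ 2 * G ^+ 2)%:E)%E.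
  apply: integral_sqnorm_discounted_sum_le => // [q | q q_lt]; first exact: g_meas.
  by apply: g_bound; exact: leq_trans q_lt k_le.
have dev x : sqnorm (wavg p (fun l => w l t k x) - w i t k x)
             = c ^+ 2 * sqnorm (U i x - wavg p (U^~ x)).
  have -> : wavg p (fun l => w l t k x)
            = wavg p (fun l => wavg p (fun j => w j t 0 x) - c *: U l x).
    by apply: eq_bigr => l _; rewrite w_closed.
  by rewrite w_closed wavg_dev_affine // sqnormZ.
have U_meas l : rV_measurable (U l) by apply: rV_measurable_wsum => q; exact: g_meas.
under eq_integral do rewrite dev EFinM.
rewrite ge0_integralZl_EFin ?sqr_ge0 //; last 2 first.
- by move=> x _; rewrite lee_fin sqnorm_ge0.
- apply/measurable_EFinP/measurable_sqnorm.
  by apply: rV_measurableB => //; exact: rV_measurable_wsum.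
have dev_bound := integral_sqnorm_sub_wavg_le i p_ge0 p_sum1 U_meas U_bound.
apply: le_trans (lee_wpmul2l _ dev_bound) _; first by rewrite lee_fin sqr_ge0.
rewrite -EFinM lee_fin.
have k2_le : k%:R ^+ 2 <= nE%:R ^+ 2 :> R by rewrite ler_sqr ?nnegrE // ler_nat.
have := mulr_ge0 (sqr_ge0 c) (sqr_ge0 G); nra.
Qed.
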